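(* Let $t \ge 2$ be an integer and let $M$ be a matroid with the $(t,2t)$-property. If $M$ has a $t$-echidna $(S_1,\ldots, S_n)$ with $n\geq 4t-3$, then there exist $m\ge n$ and pairs $S_{n+1},\dots,S_m$ such that $(S_1,\ldots,S_n,S_{n+1},\dots,S_m)$ is a partition of $E(M)$ that is both a $t$-echidna and a $t$-coechidna of $M$.
   Context: A matroid $M$ has the $(t,2t)$-property if every $t$-element subset of $E(M)$ is contained in both a $2t$-element circuit and a $2t$-element cocircuit of $M$. A $t$-echidna of order $n$ of $M$ is a partition $(S_1,\ldots,S_n)$ of a subset of $E(M)$ such that $|S_i|=2$ for all $i\in\{1,\dots,n\}$, and $\bigcup_{i\in I}S_i$ is a circuit of $M$ for every $I\subseteq\{1,\dots,n\}$ with $|I|=t$. A $t$-coechidna of $M$ is a $t$-echidna of the dual matroid $M^*$. *)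

(* Finite matroids on a finType T, ground set E(M) = [set: T]. *)
From mathcomp Require Import all_boot.
Set Implicit Arguments. Unset Strict Implicit. Unset Printing Implicit Defensive.

Record matroid (T : finType) := Matroid {
  indep : {set T} -> bool;
  indep0 : indep set0;
  indep_sub : forall X Y : {set T}, X \subset Y -> indep Y -> indep X;
  indep_aug : forall X Y : {set T}, indep X -> indep Y -> #|X| < #|Y| ->
     exists2 y, y \in Y :\: X & indep (y |: X)
}.

Section MatroidDefs.
Variable T : finType.

Definition circuit_of (ind : {set T} -> bool) (C : {set T}) : Prop :=
  ~~ ind C /\ (forall D : {set T}, D \proper C -> ind D).

Definition circuit (M : matroid T) := circuit_of (indep M).

Definition basis (M : matroid T) (B : {set T}) : bool :=
  indep M B && [forall X : {set T}, (B \subset X) && indep M X ==> (X == B)].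

Definition dual_indep (M : matroid T) (X : {set T}) : bool :=
  [exists B : {set T}, [disjoint X & B] && basis M B].

Definition cocircuit (M : matroid T) := circuit_of (dual_indep M).

Definition t2t_property (M : matroid T) (t : nat) : Prop :=
  forall X : {set T}, #|X| = t ->
    (exists C : {set T}, [/\ X \subset C, #|C| = 2 * t & circuit M C]) /\
    (exists D : {set T}, [/\ X \subset D, #|D| = 2 * t & cocircuit M D]).

Definition echidna_of (circ : {set T} -> Prop) (t : nat) (s : seq {set T}) : Prop :=
  [/\ forall i, i < size s -> #|nth set0 s i| = 2,
      forall i j, i < size s -> j < size s -> i != j ->
        [disjoint nth set0 s i & nth set0 s j]
    & forall I : {set 'I_(size s)}, #|I| = t ->
        circ (\bigcup_(i in I) nth set0 s i)].

Definition echidna (M : matroid T) := echidna_of (circuit M).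
Definition coechidna (M : matroid T) := echidna_of (cocircuit M).

Definition covers_ground (s : seq {set T}) : Prop :=
  \bigcup_(S <- s) S = [set: T].

End MatroidDefs.

From mathcomp Require Import all_boot zify.
Set Implicit Arguments. Unset Strict Implicit. Unset Printing Implicit Defensive.

(* A circuit and a cocircuit never meet in exactly one element.  Let the
   pairs S_1, ..., S_n (n >= 4t-3) form a t-echidna.  A 2t-element cocircuit D
   through one element of each of t pairs meets every pair in 0 or 2 elements:
   at most 2t pairs meet D, so a pair meeting D once, together with t-1 of the
   at least 2t-3 pairs avoiding D, would give a circuit meeting D once.  Hence
   D is the union of those t pairs, and the echidna is also a coechidna.  The
   same argument for a 2t-element circuit through an uncovered element e and
   one element of each of t-1 pairs yields an f with {e, f} plus these pairs a
   circuit; comparing with the cocircuit obtained from t-1 other pairs shows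
   that f does not depend on the chosen pairs, so {e, f} extends the echidna.
   Repeating this until E(M) is covered gives the partition. *)

Section Orthogonality.
Variables (T : finType) (M : matroid T).

Lemma basis_card_max (B X : {set T}) : basis M B -> indep M X -> #|X| <= #|B|.
Proof.
move=> /andP[indB /forallP maxB] indX; rewrite leqNgt; apply/negP => ltBX.
have [y /setDP[_ yB] indyB] := indep_aug indB indX ltBX.
have /implyP/(_ _)/eqP eqB := maxB (y |: B).
by move: yB; rewrite -eqB ?setU11 ?subsetU1.
Qed.

Lemma basis_card_min (B I : {set T}) :
  basis M B -> indep M I -> #|B| <= #|I| -> basis M I.
Proof.
move=> basB indI leBI; rewrite /basis indI; apply/forall_inP => X /andP[sIX indX].
by rewrite eq_sym eqEcard sIX (leq_trans (basis_card_max basB indX)).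
Qed.

Lemma circuit_cocircuit_meet (C D : {set T}) :
  circuit M C -> cocircuit M D -> #|C :&: D| != 1.
Proof.
move=> [depC minC] [codepD minD]; apply/negP => /cards1P[x CDx].
have /setIP[xC xD] : x \in C :&: D by rewrite CDx set11.
have /existsP[B /andP[disBD basB]] := minD _ (properD1 xD).
have sCxD : C :\ x \subset ~: D.
  apply/subsetP => y /setD1P[yx yC]; rewrite inE; apply: contra yx => yD.
  by rewrite -in_set1 -CDx inE yC.
pose p X := indep M X && (X \subset ~: D).
have pCx : p (C :\ x) by rewrite /p sCxD minC ?properD1.
have [I /maxsetP[/andP[indI sID] maxI] sCxI] := maxset_exists pCx.
have [ltIB | leBI] := ltnP #|I| #|B|.
  have [y /setDP[yB yI] indyI] := indep_aug indI (andP basB).1 ltIB.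
  case: (boolP (y \in D)) => yD.
    have yx : y = x.
      by have := disjointFl disBD yB; rewrite !inE yD andbT => /negbFE/eqP.
    move/negP: depC; apply; apply: indep_sub indyI.
    by rewrite yx -{1}(setD1K xC) setUS.
  have := maxI (y |: I); rewrite /p indyI subUset sub1set inE yD sID subsetU1.
  by move=> /(_ isT isT) eqI; move: yI; rewrite -eqI setU11.
move/negP: codepD; apply; apply/existsP; exists I.
by rewrite disjoint_sym disjoints_subset sID (basis_card_min basB indI leBI).
Qed.

End Orthogonality.

Lemma exists_subset_card (T : finType) (A : {set T}) k :
  k <= #|A| -> exists2 B : {set T}, B \subset A & #|B| = k.
Proof.
move=> lekA; exists [set x in take k (enum A)].
  by apply/subsetP => x; rewrite inE => /mem_take; rewrite mem_enum.
by rewrite cardsE (card_uniqP (take_uniq _ (enum_uniq _))) size_takel -?cardE.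
Qed.

Section PairFamilies.
Variable T : finType.
Implicit Types (P F G : {set {set T}}) (A B D S X Z : {set T}).

Definition pair_family P := trivIset P /\ {in P, forall S, #|S| = 2}.

Definition t_unions (circ : {set T} -> Prop) t P :=
  forall F, F \subset P -> #|F| = t -> circ (cover F).

Definition orthogonal (circ cocirc : {set T} -> Prop) :=
  forall C D, circ C -> cocirc D -> #|C :&: D| != 1.

Definition t2t_sets (circ : {set T} -> Prop) t :=
  forall X, #|X| = t -> exists D, [/\ X \subset D, #|D| = 2 * t & circ D].

Lemma coverS F G : F \subset G -> cover F \subset cover G.
Proof. by move=> sFG; apply/bigcupsP => S FS; apply: bigcup_sup (subsetP sFG S FS). Qed.

Lemma pair_subset_of_meet S Z :
  #|S| = 2 -> #|S :&: Z| != 1 -> ~~ [disjoint S & Z] -> S \subset Z.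
Proof.
move=> S2 SZn1; rewrite -setI_eq0 -cards_eq0 => SZn0.
have leSZ : #|S :&: Z| <= #|S| by rewrite subset_leq_card ?subsetIl.
have eqSZ : #|S :&: Z| = #|S| by move: SZn1 SZn0 leSZ; rewrite S2; lia.
by apply/setIidPl/eqP; rewrite eqEcard subsetIl eqSZ leqnn.
Qed.

Lemma orthogonal_partner_eq (circ cocirc : {set T} -> Prop) e f g A B :
  orthogonal circ cocirc -> circ (f |: (e |: A)) -> cocirc (g |: (e |: B)) ->
  [disjoint A & B] -> f \notin B -> g \notin A -> f = g.
Proof.
move=> orth circA cocircB dAB fB gA; apply/eqP.
apply: contraNT (orth _ _ circA cocircB) => fg; apply/cards1P; exists e.
apply/setP => x; rewrite !inE.
case: (eqVneq x e) => [|xe]; rewrite ?orbT //= ?orbF.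
apply/negbTE; rewrite negb_and !negb_or.
case: (eqVneq x f) => [->|_]; first by rewrite fg fB orbT.
case: (eqVneq x g) => [->|_]; first by rewrite gA.
by case: (boolP (x \in A)) => //= xA; rewrite (disjointFr dAB xA).
Qed.

End PairFamilies.

Section FixedPairFamily.
Variables (T : finType) (P : {set {set T}}).
Hypothesis pairP : pair_family P.
Implicit Types (F G : {set {set T}}) (D S X Z : {set T}).

Lemma notin_block S y : S \in P -> y \notin cover P -> y \notin S.
Proof. by move=> PS; apply: contra => yS; apply/bigcupP; exists S. Qed.

Lemma disjoint_block_cover F S :
  F \subset P -> S \in P -> S \notin F -> [disjoint S & cover F].
Proof.
move=> sFP PS FS; apply/bigcup_disjointP => S' FS'.
move/trivIsetP: pairP.1 => /(_ S S' PS (subsetP sFP S' FS')); apply.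
by apply: contraNneq FS => ->.
Qed.

Lemma disjoint_cover F G : F \subset P -> G \subset P ->
  [disjoint F & G] -> [disjoint cover F & cover G].
Proof.
move=> sFP sGP dFG; apply/bigcup_disjointP => S GS.
by rewrite disjoint_sym disjoint_block_cover ?(subsetP sGP) ?(disjointFl dFG GS).
Qed.

Lemma card_cover_pairs F : F \subset P -> #|cover F| = 2 * #|F|.
Proof.
move=> sFP; rewrite -(eqP (trivIsetS sFP pairP.1)) mulnC -sum_nat_const.
by apply: eq_bigr => S FS; apply: pairP.2 _ (subsetP sFP S FS).
Qed.

Lemma card_blocks_meeting Z : #|[set S in P | ~~ [disjoint S & Z]]| <= #|Z|.
Proof.
apply: leq_trans (leq_imset_card (pblock P) Z); apply: subset_leq_card.
apply/subsetP => S /setIdP[PS]; rewrite -setI_eq0 => /set0Pn[x /setIP[xS xZ]].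
by apply/imsetP; exists x; rewrite // (def_pblock pairP.1 PS xS).
Qed.

Lemma transversal_pairs F : F \subset P ->
  exists X, [/\ X \subset cover F, #|X| = #|F| & {in F, forall S, ~~ [disjoint S & X]}].
Proof.
move=> sFP; have partF : partition F (cover F).
  rewrite /partition eqxx (trivIsetS sFP pairP.1); apply/negP => F0.
  by have := pairP.2 _ (subsetP sFP _ F0); rewrite cards0.
have trF := transversalP partF; have /and3P[_ sXF /forall_inP X1] := trF.
exists (transversal F (cover F)); split => //; first exact: card_transversal trF.
by move=> S FS; rewrite -setI_eq0 setIC -cards_eq0 (eqP (X1 S FS)).
Qed.

Variable t : nat.
Hypotheses (t_ge2 : 2 <= t) (P_big : 4 * t - 3 <= #|P|).

Lemma pair_meet_not_once Z : #|Z| <= 2 * t ->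
    (forall F, F \subset P -> #|F| = t -> #|cover F :&: Z| != 1) ->
  {in P, forall S, #|S :&: Z| != 1}.
Proof.
move=> cZ unionsZ S PS; apply/negP => /eqP SZ1.
set N := [set S' in P | ~~ [disjoint S' & Z]].
have NS : S \in N by rewrite inE PS -setI_eq0 -cards_eq0 SZ1.
have cN : #|N| <= #|Z| := card_blocks_meeting Z.
have sNP : N \subset P by apply/subsetP => ? /setIdP[].
have : t - 1 <= #|P :\: N|.
  by rewrite cardsD (setIidPr sNP); move: cN cZ; lia.
case/exists_subset_card => G /subsetP sG cG.
have GS : S \notin G by apply: contraL NS => /sG; rewrite inE => /andP[].
have sSG : S |: G \subset P.
  by rewrite subUset sub1set PS; apply/subsetP => S' /sG /setDP[].
have cSG : #|S |: G| = t by rewrite cardsU1 GS cG; lia.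
have GZ : cover G :&: Z = set0.
  apply/disjoint_setI0; rewrite disjoint_sym; apply/bigcup_disjointP => S' GS'.
  have /setDP[PS' /negP] := sG S' GS'.
  by rewrite inE PS' disjoint_sym => /negP/negPn.
have := unionsZ _ sSG cSG.
by rewrite /cover big_setU1 //= setIUl -/(cover G) GZ setU0 SZ1.
Qed.

Variables (circ cocirc : {set T} -> Prop).
Hypotheses (orth : orthogonal circ cocirc) (circ_unions : t_unions circ t P).
Hypothesis t2t_cocirc : t2t_sets cocirc t.

Lemma block_subset_cocirc D S : cocirc D -> #|D| = 2 * t ->
  S \in P -> ~~ [disjoint S & D] -> S \subset D.
Proof.
move=> cocircD cD PS meetSD; apply: pair_subset_of_meet (pairP.2 S PS) _ meetSD.
apply: pair_meet_not_once PS; first by rewrite cD.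
by move=> F sFP cF; apply: orth cocircD; apply: circ_unions.
Qed.

Lemma cover_subset_cocirc D F X : cocirc D -> #|D| = 2 * t -> F \subset P ->
  X \subset D -> {in F, forall S, ~~ [disjoint S & X]} -> cover F \subset D.
Proof.
move=> cocircD cD sFP sXD meetX; apply/bigcupsP => S FS.
apply: block_subset_cocirc (subsetP sFP S FS) _ => //.
by apply: contra (meetX S FS); apply: disjointWr.
Qed.

Lemma t_unions_orthogonal : t_unions cocirc t P.
Proof.
move=> F sFP cF; have [X [sXF cX meetX]] := transversal_pairs sFP.
have [D [sXD cD cocircD]] := t2t_cocirc (etrans cX cF).
suff -> : cover F = D by [].
apply/eqP; rewrite eqEcard (card_cover_pairs sFP) cF cD leqnn andbT.
exact: cover_subset_cocirc sXD meetX.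
Qed.

Lemma partner_exists e F : e \notin cover P -> F \subset P -> #|F| = t - 1 ->
  exists f, [/\ f != e, f \notin cover P & cocirc (f |: (e |: cover F))].
Proof.
move=> eP sFP cF; have [X [sXF cX meetX]] := transversal_pairs sFP.
have eF : e \notin cover F by apply: contra eP; apply/subsetP/coverS.
have eX : e \notin X by apply: contra eF; apply/subsetP.
have ceX : #|e |: X| = t by rewrite cardsU1 eX cX cF; lia.
have [D [sXD cD cocircD]] := t2t_cocirc ceX.
set A := e |: cover F.
have sAD : A \subset D.
  rewrite subUset sub1set (subsetP sXD) ?setU11 //=.
  by apply: cover_subset_cocirc meetX => //; apply: subset_trans sXD; apply: subsetU1.
have cA : #|A| = (2 * t).-1 by rewrite cardsU1 eF (card_cover_pairs sFP) cF; lia.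
have /cards1P[f DAf] : #|D :\: A| == 1 by rewrite cardsD (setIidPr sAD) cD cA; lia.
have /setDP[fD fA] : f \in D :\: A by rewrite DAf set11.
have DfA : D = f |: A.
  by rewrite -{1}(setID D A) (setIidPr sAD) DAf setUC.
exists f; split; last by rewrite -DfA.
- by apply: contraNneq fA => ->; rewrite setU11.
- apply/bigcupP => -[S PS fS].
  have FS : S \notin F.
    by apply: contra fA => FS; apply/setU1P; right; apply/bigcupP; exists S.
  have sSD : S \subset D.
    apply: block_subset_cocirc PS _ => //.
    by apply/negP => /disjointFr/(_ fS); rewrite fD.
  have : S \subset [set f].
    rewrite -DAf; apply/subsetP => y yS; rewrite !inE (subsetP sSD) // andbT negb_or.
    rewrite (disjointFr (disjoint_block_cover sFP PS FS) yS) andbT.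
    by apply: contraTneq yS => ->; apply: notin_block.
  by move/subset_leq_card; rewrite cards1 pairP.2.
Qed.

Lemma extend_pair_family e f :
    e \notin cover P -> f \notin cover P -> f != e ->
    (forall F, F \subset P -> #|F| = t - 1 -> circ (f |: (e |: cover F))) ->
  pair_family ([set e; f] |: P) /\ t_unions circ t ([set e; f] |: P).
Proof.
move=> eP fP fe partner; set ef := [set e; f].
have disj_ef : {in P, forall S, [disjoint ef & S]}.
  move=> S PS; rewrite disjoints_subset; apply/subsetP => y.
  by rewrite !inE => /orP[] /eqP ->; apply: notin_block.
have P0 : set0 \notin P by apply/negP => /pairP.2; rewrite cards0.
have [tiP' efP] := trivIsetU1 disj_ef pairP.1 P0.
split.
  by split => // S /setU1P[-> | /pairP.2 //]; rewrite cards2 eq_sym fe.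
move=> F sF cF; case: (boolP (ef \in F)) => efF; last first.
  apply: circ_unions => //; apply/subsetP => S FS.
  by have /setU1P[SE | //] := subsetP sF S FS; rewrite -SE FS in efF.
have sF' : F :\ ef \subset P.
  apply/subsetP => S /setD1P[Sef FS].
  by have /setU1P[SE | //] := subsetP sF S FS; rewrite SE eqxx in Sef.
have cF' : #|F :\ ef| = t - 1.
  by move: cF; rewrite (cardsD1 ef F) efF add1n => <-; rewrite subn1.
suff -> : cover F = f |: (e |: cover (F :\ ef)) by apply: partner.
by rewrite /cover (big_setD1 _ efF) /= setUCA setUA.
Qed.

End FixedPairFamily.

Section EchidnaExtension.
Variables (T : finType) (M : matroid T) (t : nat).
Hypotheses (t_ge2 : 2 <= t) (t2tM : t2t_property M t).
Implicit Types (P F G : {set {set T}}).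

Let t2t_circuit : t2t_sets (circuit M) t := fun X cX => (t2tM cX).1.
Let t2t_cocircuit : t2t_sets (cocircuit M) t := fun X cX => (t2tM cX).2.
Let orth : orthogonal (circuit M) (cocircuit M) := @circuit_cocircuit_meet _ M.
Let coorth : orthogonal (cocircuit M) (circuit M).
Proof. by move=> D C cocircD circC; rewrite setIC orth. Qed.

Lemma echidna_coechidna P : pair_family P -> 4 * t - 3 <= #|P| ->
  t_unions (circuit M) t P -> t_unions (cocircuit M) t P.
Proof.
by move=> pairP P_big unionsP; exact: t_unions_orthogonal orth unionsP t2t_cocircuit.
Qed.

Lemma echidna_partner P e : pair_family P -> 4 * t - 3 <= #|P| ->
    t_unions (circuit M) t P -> e \notin cover P ->
  exists f, [/\ f != e, f \notin cover P &
    forall F, F \subset P -> #|F| = t - 1 -> circuit M (f |: (e |: cover F))].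
Proof.
move=> pairP P_big unionsP eP.
have cocircP := echidna_coechidna pairP P_big unionsP.
have [F0 sF0 cF0] : exists2 F0 : {set {set T}}, F0 \subset P & #|F0| = t - 1.
  by apply: exists_subset_card; lia.
have [f0 [f0e f0P circF0]] :=
  partner_exists pairP t_ge2 P_big coorth cocircP t2t_circuit eP sF0 cF0.
exists f0; split => // F sF cF.
have : t - 1 <= #|P :\: (F :|: F0)|.
  have := (leq_card_setU F F0).1; have := subset_leq_card (subsetIr P (F :|: F0)).
  by rewrite cardsD cF cF0; lia.
case/exists_subset_card => G sG cG.
have sGP : G \subset P by apply: subset_trans sG (subsetDl _ _).
have [dFG dF0G] : [disjoint F & G] /\ [disjoint F0 & G].
  move: sG; rewrite subsetD disjoints_subset setCU subsetI -!disjoints_subset.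
  by case/and3P => _ dGF dGF0; rewrite disjoint_sym dGF disjoint_sym dGF0.
have outside y F' : F' \subset P -> y \notin cover P -> y \notin cover F'.
  by move=> sF'P; apply: contra; apply/subsetP/coverS.
have [g [_ gP cocircG]] :=
  partner_exists pairP t_ge2 P_big orth unionsP t2t_cocircuit eP sGP cG.
have [f [_ fP circF]] :=
  partner_exists pairP t_ge2 P_big coorth cocircP t2t_circuit eP sF cF.
have f0g : f0 = g.
  by apply: orthogonal_partner_eq orth circF0 cocircG
    (disjoint_cover pairP sF0 sGP dF0G) (outside _ _ sGP f0P) (outside _ _ sF0 gP).
have fg : f = g.
  by apply: orthogonal_partner_eq orth circF cocircG
    (disjoint_cover pairP sF sGP dFG) (outside _ _ sGP fP) (outside _ _ sF gP).
by rewrite f0g -fg.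
Qed.

Lemma echidna_extend_to_ground P : pair_family P -> 4 * t - 3 <= #|P| ->
    t_unions (circuit M) t P ->
  exists2 P' : {set {set T}}, P \subset P' &
    [/\ pair_family P', t_unions (circuit M) t P' & cover P' = [set: T]].
Proof.
elim: {P}_.+1 {-2}P (ltnSn #|~: cover P|) => // n IH P ltPn pairP P_big unionsP.
case: (pickP [pred x | x \notin cover P]) => [e /= eP | coverP]; last first.
  exists P => //; split => //; apply/setP => x.
  by have := coverP x; rewrite !inE /= => /negbFE.
have [f [fe fP partner]] := echidna_partner pairP P_big unionsP eP.
have [pairP' unionsP'] := extend_pair_family pairP unionsP eP fP fe partner.
have sPP' : P \subset [set e; f] |: P := subsetU1 _ _.
have lt_uncovered : #|~: cover ([set e; f] |: P)| < n.
  rewrite ltnS in ltPn; apply: leq_trans ltPn; apply: proper_card.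
  apply/properP; split; first by rewrite setCS coverS.
  exists e; first by rewrite inE.
  by rewrite inE negbK; apply/bigcupP; exists [set e; f]; rewrite ?setU11 ?set21.
have P'_big := leq_trans P_big (subset_leq_card sPP').
have [P'' sP'P'' ground] := IH _ lt_uncovered pairP' P'_big unionsP'.
by exists P''; first exact: subset_trans sPP' sP'P''.
Qed.

End EchidnaExtension.

Section SeqEchidna.
Variables (T : finType) (circ : {set T} -> Prop) (t : nat).
Implicit Types s : seq {set T}.

Lemma bigcup_seq_cover s : \bigcup_(S <- s) S = cover [set:: s].
Proof. by rewrite bigcup_seq /cover; apply: eq_bigl => S; rewrite inE. Qed.

Lemma card_nth_imset s (I : {set 'I_(size s)}) :
  uniq s -> #|[set nth set0 s i | i : 'I_(size s) in I]| = #|I|.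
Proof.
move=> us; apply: card_in_imset => i j _ _ /eqP.
by rewrite nth_uniq // => /eqP/val_inj.
Qed.

Lemma echidna_of_uniq s : echidna_of circ t s -> uniq s.
Proof.
case=> s2 sdisj _; apply/(uniqP set0) => i j ilt jlt eq_ij.
apply/eqP; apply: contraT => nij.
by have := sdisj i j ilt jlt nij; rewrite -eq_ij -setI_eq0 setIid -cards_eq0 s2.
Qed.

Lemma pair_family_seqE s : uniq s ->
  pair_family [set:: s] <->
  (forall i, i < size s -> #|nth set0 s i| = 2) /\
  (forall i j, i < size s -> j < size s -> i != j ->
     [disjoint nth set0 s i & nth set0 s j]).
Proof.
move=> us; split => [[tis s2] | [s2 sdisj]].
  split => [i ilt | i j ilt jlt nij]; first by apply: s2; rewrite inE mem_nth.
  by move/trivIsetP: tis; apply; rewrite ?inE ?mem_nth ?nth_uniq.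
split.
  apply/trivIsetP => _ _ /[!inE] /(nthP set0)[i ilt <-] /(nthP set0)[j jlt <-].
  by rewrite nth_uniq //; apply: sdisj.
by move=> _ /[!inE] /(nthP set0)[i ilt <-]; apply: s2.
Qed.

Lemma t_unions_seqE s : uniq s ->
  t_unions circ t [set:: s] <->
  (forall I : {set 'I_(size s)}, #|I| = t -> circ (\bigcup_(i in I) nth set0 s i)).
Proof.
move=> us; split => [unions I cI | unionsI F sF cF].
  rewrite -cover_imset; apply: unions; last by rewrite card_nth_imset.
  by apply/subsetP => _ /imsetP[i _ ->]; rewrite inE mem_nth.
pose I := [set i : 'I_(size s) | nth set0 s i \in F].
have FI : F = [set nth set0 s i | i : 'I_(size s) in I].
  apply/setP => S; apply/idP/imsetP => [FS | [i + ->]]; last by rewrite inE.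
  have sS : S \in s by have := subsetP sF S FS; rewrite inE.
  by exists (Ordinal (etrans (index_mem S s) sS)); rewrite ?inE /= nth_index.
by rewrite FI cover_imset; apply: unionsI; rewrite -(card_nth_imset I us) -FI.
Qed.

Lemma echidna_ofE s :
  echidna_of circ t s <->
  [/\ uniq s, pair_family [set:: s] & t_unions circ t [set:: s]].
Proof.
split => [es | [us /(pair_family_seqE us)[s2 sdisj] /(t_unions_seqE us) unions]].
  have us := echidna_of_uniq es; case: es => s2 sdisj unions.
  by split => //; [apply/pair_family_seqE | apply/t_unions_seqE].
by split.
Qed.

End SeqEchidna.

Theorem lemma4p5 (T : finType) (M : matroid T) (t : nat) (s : seq {set T}) :
  2 <= t -> t2t_property M t -> echidna M t s -> 4 * t - 3 <= size s ->
  exists s' : seq {set T},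
    [/\ size s <= size (s ++ s'), covers_ground (s ++ s'),
        echidna M t (s ++ s') & coechidna M t (s ++ s')].
Proof.
move=> t_ge2 t2tM /echidna_ofE[us pairs unions] s_big.
have P_big : 4 * t - 3 <= #|[set:: s]| by rewrite cardsE (card_uniqP us).
have [P' sP' [pairP' unionsP' groundP']] :=
  echidna_extend_to_ground t_ge2 t2tM pairs P_big unions.
pose s' := [seq S <- enum P' | S \notin s].
have us' : uniq (s ++ s').
  rewrite cat_uniq us filter_uniq ?enum_uniq // andbT.
  by apply/hasPn => S; rewrite mem_filter => /andP[].
have P'E : [set:: s ++ s'] = P'.
  apply/setP => S; rewrite !inE mem_cat mem_filter mem_enum.
  by case: (boolP (S \in s)) => //= sS; apply/esym/(subsetP sP'); rewrite inE.
exists s'; split.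
- by rewrite size_cat leq_addr.
- by rewrite /covers_ground bigcup_seq_cover P'E.
- by apply/echidna_ofE; rewrite P'E.
apply/echidna_ofE; rewrite P'E; split => //.
exact: echidna_coechidna (leq_trans P_big (subset_leq_card sP')) unionsP'.
Qed.
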